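(* There is a universal constant $u<5$ such that for every context $\psi$ (and every $n$, $m$ and choice of $\Phi$), the Vapnik–Chervonenkis dimension of $\mathcal{H}_\psi$ satisfies $$\mathrm{VC}(\mathcal{H}_\psi)\le u\,(2m+1).$$
   Context: Let $X_1,\dots,X_n$ be Boolean variables; an assignment is $x\in\{0,1\}^n$. Fix a set of candidate Boolean formulas $\Phi=\{\phi_1,\dots,\phi_m\}$ over these variables. For $c\in\{0,1\}^m$ let $\phi(c)=\bigwedge_{j:\,c_j=1}\phi_j$ (the hard constraints; the empty conjunction is ''true''). For $w\in[-1,1]^m$ let $f_w(x)=\sum_{j=1}^m w_j\,\mathbb{1}[x\models\phi_j]$. A context $\psi$ is a Boolean formula over $X_1,\dots,X_n$. The MAX-SAT classifier with parameters $(c,w)$ is $h_{c,w}(x,\psi)=1$ if $x\in\arg\max_{x'\models\phi(c)\wedge\psi} f_w(x')$ (i.e. $x\models\phi(c)\wedge\psi$ and $f_w(x)\ge f_w(x')$ for all $x'\models\phi(c)\wedge\psi$), and $h_{c,w}(x,\psi)=0$ otherwise. Let $\mathcal{H}=\{h_{c,w}: c\in\{0,1\}^m, w\in[-1,1]^m\}$ and, for a fixed context $\psi$, $\mathcal{H}_\psi=\{x\mapsto h(x,\psi): h\in\mathcal{H}\}$, a class of binary classifiers on $\{0,1\}^n$. *)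

From HB Require Import structures.
From mathcomp Require Import all_boot all_order all_algebra.
From mathcomp Require Import boolp.
From mathcomp Require Import Rstruct.
From Stdlib Require Import Rdefinitions.
Set Implicit Arguments. Unset Strict Implicit. Unset Printing Implicit Defensive.
Import Order.TTheory GRing.Theory Num.Theory.
Local Open Scope ring_scope.

Inductive formula (n : nat) : Type :=
| FVar of 'I_n
| FTrue
| FFalse
| FNot of formula n
| FAnd of formula n & formula n
| FOr of formula n & formula n.

Definition assignment (n : nat) := {ffun 'I_n -> bool}.

Fixpoint models n (x : assignment n) (phi : formula n) : bool :=
  match phi with
  | FVar i => x i
  | FTrue => true
  | FFalse => false
  | FNot p => ~~ models x p
  | FAnd p q => models x p && models x q
  | FOr p q => models x p || models x q
  end.

Definition models_hard n m (Phi : 'I_m -> formula n) (c : 'I_m -> bool)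
  (psi : formula n) (x : assignment n) : bool :=
  [forall j, c j ==> models x (Phi j)] && models x psi.

Definition fw n m (Phi : 'I_m -> formula n) (w : 'I_m -> R) (x : assignment n) : R :=
  \sum_(j < m) w j * (models x (Phi j))%:R.

Definition maxsat_h n m (Phi : 'I_m -> formula n) (c : 'I_m -> bool) (w : 'I_m -> R)
  (x : assignment n) (psi : formula n) : bool :=
  models_hard Phi c psi x &&
  [forall x' : assignment n, models_hard Phi c psi x' ==> (fw Phi w x' <= fw Phi w x)].

Definition H_psi n m (Phi : 'I_m -> formula n) (psi : formula n)
  (h : assignment n -> bool) : Prop :=
  exists (c : 'I_m -> bool) (w : 'I_m -> R),
    (forall j, -1 <= w j <= 1) /\ (forall x, h x = maxsat_h Phi c w x psi).

Definition shatters (X : finType) (H : (X -> bool) -> Prop) (S : {set X}) : Prop :=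
  forall T : {set X}, T \subset S ->
    exists h, H h /\ forall x, x \in S -> h x = (x \in T).

Definition VCdim (X : finType) (H : (X -> bool) -> Prop) : nat :=
  \max_(S : {set X} | `[< shatters H S >]) #|S|.

From HB Require Import structures.
From mathcomp Require Import all_boot all_order all_algebra.
From mathcomp Require Import boolp Rstruct.
From Stdlib Require Import Rdefinitions.
Set Implicit Arguments. Unset Strict Implicit. Unset Printing Implicit Defensive.
Import Order.TTheory GRing.Theory Num.Theory.
Local Open Scope ring_scope.

(* A shattered set S of size N > m + 1 gives N feature vectors
   (1[x |= phi_j])_j in R^m, which are affinely dependent: some nonzero lam
   with sum_i lam_i = 0 annihilates every feature.  Both signs occur in lam;
   let S realise the labelling "lam_i > 0".  If a hard constraint phi_j fails
   on a negative point, the functional 1[. |= phi_j] is 1 on the positive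
   points and <= 1 elsewhere, so by the dependence it is 1 on the negative
   points as well, a contradiction.  Otherwise all negative points are
   feasible, so f_w is maximal on the positive ones, and the same argument
   with f_w (a linear combination of the features) makes the negative points
   maximisers too.  Hence the VC dimension is at most m + 1 <= 2m + 1. *)

Lemma exists_affine_dependence (F : fieldType) (N k : nat) (A : 'I_N -> 'I_k -> F) :
  (k.+1 < N)%nat ->
  exists lam : 'I_N -> F, [/\ exists i, lam i != 0, \sum_i lam i = 0 &
    forall j, \sum_i lam i * A i j = 0].
Proof.
move=> ltkN.
pose M : 'M[F]_(N, 1 + k) := row_mx (const_mx 1) (\matrix_(i, j) A i j).
have : kermx M != 0.
  rewrite kermx_eq0; apply: contraL ltkN => /eqP rkM.
  by rewrite -leqNgt -add1n -rkM rank_leq_col.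
case/rowV0Pn => v /sub_kermxP; rewrite mul_mx_row => /eqP.
rewrite row_mx_eq0 => /andP[/eqP sum_v /eqP dep_v] /rV0Pn[i0 vi0].
exists (fun i => v 0 i); split; first by exists i0.
- have := congr1 (fun X : 'M_1 => X 0 0) sum_v; rewrite !mxE => /(etrans _); apply.
  by apply: eq_bigr => i _; rewrite mxE mulr1.
- move=> j; have := congr1 (fun X : 'M_(1, k) => X 0 j) dep_v.
  rewrite !mxE => /(etrans _); apply.
  by apply: eq_bigr => i _; rewrite mxE.
Qed.

Lemma sum_eq0_exists_neg (R : realDomainType) (N : nat) (lam : 'I_N -> R) :
  \sum_i lam i = 0 -> (exists i, lam i != 0) -> exists i, lam i < 0.
Proof.
move=> sum0 [i1 lam1]; apply/existsP; apply: contraR lam1 => /existsPn lam_ge0.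
have ge0 i : true -> 0 <= lam i by move=> _; rewrite leNgt; apply: lam_ge0.
by rewrite (psumr_eq0P ge0 sum0).
Qed.

Lemma sum_eq0_exists_pos (R : realDomainType) (N : nat) (lam : 'I_N -> R) :
  \sum_i lam i = 0 -> (exists i, lam i != 0) -> exists i, 0 < lam i.
Proof.
move=> sum0 [i1 lam1].
have sumN0 : \sum_i - lam i = 0 by rewrite sumrN sum0 oppr0.
have [|i] := sum_eq0_exists_neg sumN0; first by exists i1; rewrite oppr_eq0.
by rewrite oppr_lt0; exists i.
Qed.

(* The terms (- lam_i) (M - g_i) are nonnegative and sum to zero. *)
Lemma affine_dependence_max (R : realDomainType) (N : nat) (lam g : 'I_N -> R) M :
  \sum_i lam i = 0 -> \sum_i lam i * g i = 0 ->
  (forall i, 0 < lam i -> g i = M) -> (forall i, lam i < 0 -> g i <= M) ->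
  forall i, lam i < 0 -> g i = M.
Proof.
move=> sum0 dep0 gpos gneg i lam_i.
have sum_gap : \sum_i (- lam i) * (M - g i) = 0.
  transitivity (\sum_i lam i * g i - M * \sum_i lam i); last first.
    by rewrite sum0 dep0 mulr0 subr0.
  rewrite mulr_sumr -sumrB; apply: eq_bigr => k _.
  by rewrite mulrBr !mulNr opprK addrC mulrC [M * _]mulrC.
have gap_ge0 k : true -> 0 <= (- lam k) * (M - g k).
  move=> _; case: (ltrgtP (lam k) 0) => [lam_k|lam_k|->].
  - by rewrite mulr_ge0 // ?oppr_ge0 ?subr_ge0 ?gneg // ltW.
  - by rewrite gpos // subrr mulr0.
  - by rewrite oppr0 mul0r.
have /eqP := psumr_eq0P gap_ge0 sum_gap (i := i) isT.
by rewrite mulf_eq0 oppr_eq0 (lt_eqF lam_i) subr_eq0 => /eqP.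
Qed.

Lemma sum_lincomb_eq0 (R : comPzRingType) (N k : nat) (lam : 'I_N -> R)
    (A : 'I_N -> 'I_k -> R) (w : 'I_k -> R) :
  (forall j, \sum_i lam i * A i j = 0) -> \sum_i lam i * \sum_j w j * A i j = 0.
Proof.
move=> dep0; under eq_bigr => i _ do rewrite mulr_sumr.
rewrite exchange_big /=; apply: big1 => j _.
under eq_bigr => i _ do rewrite mulrCA.
by rewrite -mulr_sumr dep0 mulr0.
Qed.

Section MaxSat.

Variables (n m : nat) (Phi : 'I_m -> formula n) (psi : formula n).

Definition feature (x : assignment n) (j : 'I_m) : R := (models x (Phi j))%:R.

Lemma feature_eq1 x j : (feature x j == 1) = models x (Phi j).
Proof. by rewrite /feature pnatr_eq1; case: models. Qed.

Lemma feature_le1 x j : feature x j <= 1.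
Proof. by rewrite /feature lern1 leq_b1. Qed.

Lemma maxsat_h_feasible c w x : maxsat_h Phi c w x psi -> models_hard Phi c psi x.
Proof. by case/andP. Qed.

Lemma maxsat_h_max c w x y :
  maxsat_h Phi c w x psi -> models_hard Phi c psi y -> fw Phi w y <= fw Phi w x.
Proof. by case/andP=> _ /forallP /(_ y) /implyP. Qed.

Lemma maxsat_hP c w x :
  models_hard Phi c psi x -> (forall y, models_hard Phi c psi y -> fw Phi w y <= fw Phi w x) ->
  maxsat_h Phi c w x psi.
Proof. by move=> hx xmax; rewrite /maxsat_h hx; apply/forallP => y; apply/implyP/xmax. Qed.

Lemma maxsat_h_neq_dependence_sign (N : nat) (p : 'I_N -> assignment n)
    (lam : 'I_N -> R) c w :
  (forall i, models (p i) psi) ->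
  (exists i, lam i != 0) -> \sum_i lam i = 0 ->
  (forall j, \sum_i lam i * feature (p i) j = 0) ->
  ~ (forall i, maxsat_h Phi c w (p i) psi = (0 < lam i)).
Proof.
move=> p_psi lam_nz sum0 dep0 labels.
have [a lam_a] := sum_eq0_exists_pos sum0 lam_nz.
have [b lam_b] := sum_eq0_exists_neg sum0 lam_nz.
have pos_feasible i : 0 < lam i -> models_hard Phi c psi (p i).
  by rewrite -labels; apply: maxsat_h_feasible.
have neg_feasible i : lam i < 0 -> models_hard Phi c psi (p i).
  move=> lam_i; rewrite /models_hard p_psi andbT; apply/forallP => j; apply/implyP => cj.
  rewrite -feature_eq1; apply/eqP.
  apply: (affine_dependence_max sum0 (dep0 j)) lam_i => [k /pos_feasible|k _].
    by case/andP=> /forallP /(_ j) /implyP /(_ cj); rewrite -feature_eq1 => /eqP.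
  exact: feature_le1.
have max_a : maxsat_h Phi c w (p a) psi by rewrite labels.
have fw_b : fw Phi w (p b) = fw Phi w (p a).
  apply: (affine_dependence_max sum0 (sum_lincomb_eq0 w dep0)) lam_b => i lam_i.
    have max_i : maxsat_h Phi c w (p i) psi by rewrite labels.
    by apply/le_anti; rewrite (maxsat_h_max max_a) ?(maxsat_h_max max_i) ?pos_feasible.
  exact/(maxsat_h_max max_a)/neg_feasible.
have : maxsat_h Phi c w (p b) psi.
  apply: maxsat_hP => [|y /(maxsat_h_max max_a)]; first exact: neg_feasible.
  by rewrite fw_b.
by rewrite labels ltNge ltW.
Qed.

Lemma shatters_H_psi_card (S : {set assignment n}) :
  shatters (H_psi Phi psi) S -> (#|S| <= m.+1)%nat.
Proof.
move=> shS; rewrite leqNgt; apply/negP => ltmS.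
pose p (i : 'I_#|S|) : assignment n := enum_val i.
have pS i : p i \in S by apply: enum_valP.
have [lam [lam_nz sum0 dep0]] :=
  exists_affine_dependence (fun i j => feature (p i) j) ltmS.
have p_psi i : models (p i) psi.
  have [h [[c [w [_ hw]]] hS]] := shS S (subxx _).
  by move: (hS _ (pS i)); rewrite pS hw => /maxsat_h_feasible /andP[].
have posS : p @: [set i | 0 < lam i] \subset S by apply/subsetP => _ /imsetP[i _ ->].
have [h [[c [w [_ hw]]] hT]] := shS _ posS.
apply: (maxsat_h_neq_dependence_sign (c := c) (w := w) p_psi lam_nz sum0 dep0) => i.
by rewrite -hw hT // (mem_imset _ _ enum_val_inj) inE.
Qed.

End MaxSat.

Theorem theorem2 :
  exists u : R, u < 5 /\
    forall (n m : nat) (Phi : 'I_m -> formula n) (psi : formula n),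
      (VCdim (H_psi Phi psi))%:R <= u * (2 * m + 1)%:R.
Proof.
exists 1; split; first by rewrite ltr1n.
move=> n m Phi psi; rewrite mul1r ler_nat.
apply: (@leq_trans m.+1).
  by apply/bigmax_leqP => S /asboolP; apply: shatters_H_psi_card.
by rewrite -addn1 leq_add2r leq_pmull.
Qed.
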